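(* Let $\Sigma$ be a finite set with $n$ elements and $\mathcal{R}$ a reflexive symmetric relation on $\Sigma$, and let $\mathcal{G}$ be the simple graph on $\Sigma$ whose edges are the pairs $\{a,b\}$, $a\neq b$, with $(a,b)\in\mathcal{R}$. Then $\mathcal{G}$ is chordal if and only if there exists an enumeration $a_1,\dots,a_n$ of $\Sigma$ such that for all $1\leqslant k<\ell\leqslant n$, either $a_k\in\mathscr{L}(a_\ell)$, or $C_k\cap\mathscr{L}(a_\ell)=\emptyset$, where $C_k$ is the connected component of $a_k$ in the subgraph of $\mathcal{G}$ induced by $\{a_1,\dots,a_k\}$.
   Context: $\mathscr{L}(a)=\{b\in\Sigma:(a,b)\in\mathcal{R}\}$ (so $a\in\mathscr{L}(a)$). A graph is chordal if it has no induced cycle of length $4$ or more. (In the paper, the stated condition on the enumeration is exactly the condition under which the rejection sampling procedures Algorithms 2 and 4 never reject.) *)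

From mathcomp Require Import all_boot.
Set Implicit Arguments. Unset Strict Implicit. Unset Printing Implicit Defensive.

Definition gedge (T : finType) (R : rel T) : rel T :=
  [rel a b | (a != b) && R a b].

Definition Lset (T : finType) (R : rel T) (a : T) : {set T} := [set b | R a b].

Definition induced_cycle (T : finType) (e : rel T) (m : nat) (f : 'I_m -> T) :=
  injective f /\
  forall i j : 'I_m,
    e (f i) (f j) = (val j == (val i).+1 %% m) || (val i == (val j).+1 %% m).

Definition chordal (T : finType) (e : rel T) :=
  forall (m : nat) (f : 'I_m -> T), 4 <= m -> ~ induced_cycle e f.

Definition induced_rel (T : finType) (e : rel T) (P : {set T}) : rel T :=
  [rel x y | [&& e x y, x \in P & y \in P]].

(* Connected component of x in the subgraph induced by P (assumes x \in P). *)
Definition component (T : finType) (e : rel T) (P : {set T}) (x : T) : {set T} :=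
  [set y | connect (induced_rel e P) x y].

From mathcomp Require Import all_boot zify.
Set Implicit Arguments. Unset Strict Implicit. Unset Printing Implicit Defensive.

(* (=>) By Dirac's lemma a chordal graph has a simplicial vertex v.  Listing v
   first and then, recursively, an enumeration of the rest works: adding v to
   {a_2, ..., a_k} enlarges C_k by at most v, and if a_l were adjacent to v it
   would, v being simplicial, also be adjacent to a neighbour of v in C_k.
   Dirac's lemma is proved in the stronger form: if u has a non-neighbour y,
   some simplicial vertex is a non-neighbour of u.  Let D be the component of
   y among the non-neighbours of u and S the neighbours of u adjacent to D.
   A chordless path through D between two non-adjacent vertices of S would
   close an induced cycle through u, so S is a clique; induction on D :|: S
   then yields a simplicial vertex of D, whose neighbours all lie in D :|: S.
   (<=) Let w be the vertex of an induced cycle of length >= 4 enumerated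
   last, and x, y its two neighbours.  If a later vertex is adjacent to some
   vertex of a connected set of earlier vertices, it is adjacent to the last
   enumerated one z, since the set lies in C_z.  Applied to the path
   P = cycle - w this gives z \in {x, y}, say z = x; applied to P - x it
   gives that y is its last vertex, and then x is adjacent to y: a chord. *)

Lemma eqn_mod_le a b m : a < m -> b <= m ->
  (a == b %[mod m]) = (a == b) || (b == m) && (a == 0).
Proof.
move=> am bm; rewrite (modn_small am).
case: (ltngtP b m) bm => // [bm _|-> _]; first by rewrite (modn_small bm) orbF.
by rewrite modnn; lia.
Qed.

Lemma split_has_last (T : eqType) (a : pred T) p : has a p ->
  exists p1 z p2, [/\ p = p1 ++ z :: p2, a z & ~~ has a p2].
Proof.
elim: p => //= w p IH; case hp: (has a p) => /=.
  by have [p1 [z [p2 [-> az np2]]]] := IH hp; exists (w :: p1), z, p2.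
by rewrite orbF => aw; exists [::], w, p; rewrite hp.
Qed.

Lemma connect_invariant (T : finType) (e : rel T) (a : T -> Prop) x y :
  (forall u v, a u -> e u v -> a v) -> a x -> connect e x y -> a y.
Proof.
move=> ea ax /connectP [p + ->]; elim: p x ax => //= z p IH x ax /andP [exz].
exact/IH/ea/exz.
Qed.

Lemma exists_argmax_seq (T : eqType) (rk : T -> nat) x r :
  exists2 z, z \in x :: r & {in x :: r, forall c, rk c <= rk z}.
Proof.
elim: r x => [|y r IH] x; first by exists x => [|c /[!inE] /eqP ->]; rewrite ?mem_head.
have [z zyr zmax] := IH y; have [le_xz|lt_zx] := leqP (rk x) (rk z).
  by exists z => [|c /[!inE] /predU1P [->|/zmax] //]; rewrite inE zyr orbT.
exists x => [|c /[!inE] /predU1P [->//|/zmax cz]]; first exact: mem_head.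
exact: leq_trans cz (ltnW lt_zx).
Qed.

Section Graph.

Variables (T : finType) (e : rel T).

Lemma induced_rel_sym (P : {set T}) : symmetric e -> symmetric (induced_rel e P).
Proof.
by move=> e_sym x y; rewrite /induced_rel /= e_sym; case: (x \in P); case: (y \in P).
Qed.

Lemma induced_path_sub (P : {set T}) x p : path (induced_rel e P) x p -> {subset p <= P}.
Proof.
elim: p x => //= w p IH x /andP [/and3P [_ _ wP] pw] z.
by rewrite inE => /predU1P [-> //|/(IH _ pw)].
Qed.

Lemma connect_induced_sub (P Q : {set T}) x y : P \subset Q ->
  connect (induced_rel e P) x y -> connect (induced_rel e Q) x y.
Proof.
move=> /subsetP PQ; apply: connect_sub => u v /and3P [euv uP vP].
by apply: connect1; rewrite /induced_rel /= euv !PQ.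
Qed.

Lemma component_sub (P : {set T}) b : b \in P -> component e P b \subset P.
Proof.
move=> bP; apply/subsetP => c; rewrite inE.
by apply: (connect_invariant (a := fun z => z \in P)) => // u v _ /and3P [].
Qed.

Fixpoint chordless_path (x : T) (p : seq T) : bool :=
  if p is y :: p' then
    [&& e x y, x \notin p, all (fun z => ~~ e x z) p' & chordless_path y p']
  else true.

Lemma chordless_path_uniq x p : chordless_path x p -> uniq (x :: p).
Proof. by elim: p x => //= y p IH x /and4P [_ -> _ /IH]. Qed.

Lemma chordless_subpath x p : uniq (x :: p) -> path e x p -> x != last x p ->
  exists p', [/\ chordless_path x p', last x p' = last x p & {subset p' <= p}].
Proof.
(* Jump from x to its last neighbour on p, then recurse. *)
have [n] := ubnP (size p); elim: n x p => // n IH x p sz_p uxp pxp xl.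
have [p1 [z [p2 [Dp exz not_exp2]]]] : exists p1 z p2,
    [/\ p = p1 ++ z :: p2, e x z & ~~ has (e x) p2].
  apply: split_has_last; case: p {sz_p uxp} pxp xl => [|w p] /=; first by rewrite eqxx.
  by case/andP=> ->.
have xp : x \notin p by case/andP: uxp.
have zp : z \in p by rewrite Dp mem_cat mem_head orbT.
have lz : last z p2 = last x p by rewrite Dp last_cat.
have sub2 : {subset p2 <= p} by move=> c c2; rewrite Dp mem_cat inE c2 !orbT.
have [zl|zl] := eqVneq z (last x p).
  by exists [:: z]; split=> //= [|c /[!inE] /eqP ->//]; rewrite exz inE eq_sym (memPn xp).
have sz2 : size p2 < n by move: sz_p; rewrite Dp size_cat /=; lia.
have uz2 : uniq (z :: p2).
  by move: uxp; rewrite Dp /= cat_uniq => /andP [_ /and3P []].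
have pz2 : path e z p2 by move: pxp; rewrite Dp cat_path => /andP [_ /andP []].
have zl2 : z != last z p2 by rewrite lz.
have [p' [cp' lp' sub']] := IH z p2 sz2 uz2 pz2 zl2.
exists (z :: p'); split=> /= [||c /predU1P [-> //|/sub' /sub2 //]]; last by rewrite lp'.
have xp' : x \notin p' by apply/negP => /sub' /sub2; apply/negP.
have nexp' : all (fun c => ~~ e x c) p'.
  by apply/allP=> c /sub' c2; apply: contra not_exp2 => exc; apply/hasP; exists c.
by rewrite exz cp' nexp' inE negb_or xp' eq_sym (memPn xp).
Qed.

Definition simplicial (V : {set T}) (w : T) :=
  {in V &, forall x y, e w x -> e w y -> x != y -> e x y}.

Definition non_nbr (V : {set T}) (u : T) := [set z in V | (z != u) && ~~ e u z].

Definition boundary (V : {set T}) (u : T) (D : {set T}) :=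
  [set x in V | e u x && [exists d in D, e x d]].

Definition simplicial_avoiding (V : {set T}) :=
  forall u y, u \in V -> y \in non_nbr V u ->
  exists2 w, w \in non_nbr V u & simplicial V w.

Section Symmetric.

Hypotheses (e_sym : symmetric e) (e_irr : irreflexive e).

Lemma chordless_path_adj x p x0 i j : chordless_path x p ->
  i < size (x :: p) -> j < size (x :: p) ->
  e (nth x0 (x :: p) i) (nth x0 (x :: p) j) = (j == i.+1) || (i == j.+1).
Proof.
elim: p x i j => [|y p IH] x i j.
  by case: i j => [|i] [|j] //= _ _ _; rewrite e_irr.
move=> /= /and4P [exy _ nexp cp].
have adj0 k : k < (size p).+2 -> e x (nth x0 [:: x, y & p] k) = (k == 1).
  case: k => [|[|k]] /= k_lt; [by rewrite e_irr | by rewrite exy |].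
  exact/negbTE/(allP nexp)/mem_nth.
case: i j => [|i] [|j] i_lt j_lt; last exact: IH.
- by rewrite adj0.
- by rewrite adj0 // orbF.
- by rewrite e_sym adj0.
Qed.

Lemma induced_cycle_nth c x0 : uniq c ->
  (forall i j, i < size c -> j < size c -> e (nth x0 c i) (nth x0 c j) =
     (j == i.+1 %[mod size c]) || (i == j.+1 %[mod size c])) ->
  induced_cycle e (fun i : 'I_(size c) => nth x0 c i).
Proof.
move=> uc adj; split=> [i j /eqP|i j]; first by rewrite nth_uniq // => /eqP /val_inj.
by rewrite adj // !(modn_small (ltn_ord _)).
Qed.

Lemma chordless_cycle_not_chordal u x p : chordless_path x p -> 2 <= size p ->
  u \notin x :: p ->
  (forall j, j < size (x :: p) -> e u (nth u (x :: p) j) = (j == 0) || (j == size p)) ->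
  ~ chordal e.
Proof.
move=> cp p2 uxp adju chord_e.
have uc : uniq (u :: x :: p) by rewrite cons_uniq uxp chordless_path_uniq.
apply: (chord_e _ _ _ (induced_cycle_nth (x0 := u) uc _)); first by rewrite /= ltnS.
case=> [|i] [|j] /= i_lt j_lt; rewrite !eqn_mod_le ?e_irr //=.
- by rewrite adju //; lia.
- by rewrite e_sym adju //; lia.
by rewrite (chordless_path_adj _ cp) //; lia.
Qed.

Lemma non_nbr_sym (V : {set T}) x y :
  x \in V -> y \in non_nbr V x -> x \in non_nbr V y.
Proof. by move=> xV; rewrite !inE xV e_sym eq_sym => /and3P [_ -> ->]. Qed.

Lemma simplicial_outside_clique (H S : {set T}) d :
  S \subset H -> d \in H :\: S -> {in S &, forall x y, x != y -> e x y} ->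
  simplicial_avoiding H -> exists2 w, w \in H :\: S & simplicial H w.
Proof.
move=> SH dHS S_clique avoidH.
have found x y : x \in H -> y \in non_nbr H x -> {in non_nbr H x, forall z, z \notin S} ->
    exists2 w, w \in H :\: S & simplicial H w.
  move=> xH yx sepS; have [w wx w_simp] := avoidH x y xH yx.
  by exists w; rewrite // inE sepS //; case/setIdP: wx.
case: (pickP [pred x in S | non_nbr H x != set0]) => [x /andP [xS /set0Pn [y yx]]|noS].
  apply: (found x y) => //; first exact: subsetP xS.
  move=> z /setIdP [_ /andP [zx nexz]]; apply: contraNN nexz => zS.
  by apply: S_clique; rewrite // eq_sym.
case: (pickP [pred x in H | non_nbr H x != set0]) => [x /andP [xH /set0Pn [y yx]]|noH].
  apply: (found x y) => // z zx; apply: contraFN (noS z) => zS /=.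
  by rewrite zS; apply/set0Pn; exists x; apply: non_nbr_sym => //; case/setIdP: zx.
exists d => // x y xH yH _ _ xy; apply: contraFT (noH x) => nexy /=.
by rewrite xH; apply/set0Pn; exists y; rewrite inE yH eq_sym xy.
Qed.

Section Chordal.

Hypothesis chord_e : chordal e.

Lemma chordal_common_nbr_adj u x y (X : {set T}) :
  u \notin X -> x != y -> e u x -> e u y ->
  {in X, forall z, e u z -> (z == x) || (z == y)} ->
  connect (induced_rel e X) x y -> e x y.
Proof.
move=> uX xy eux euy nbrX /connectP [p0 pth0 Dy]; apply/negPn/negP => nexy.
have p0X := induced_path_sub pth0.
have pe0 : path e x p0 by apply: sub_path pth0 => a b /and3P [].
case/shortenP: pe0 Dy => p pth up sub Dy.
have xl : x != last x p by rewrite -Dy.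
have [q [cq lq subq]] := chordless_subpath up pth xl.
rewrite -Dy in lq; have uq := chordless_path_uniq cq.
have nth_last_q : nth u (x :: q) (size q) = y by rewrite (nth_last u (x :: q)) /= lq.
apply: (chordless_cycle_not_chordal (u := u) cq _ _ _ chord_e).
- case: q cq lq {subq uq nth_last_q} => [|c [|c' q]] //= => [_ Dx|/andP [exc _] Dc].
    by rewrite Dx eqxx in xy.
  by rewrite -Dc exc in nexy.
- rewrite inE negb_or; apply/andP; split.
    by apply: contraTneq eux => ->; rewrite e_irr.
  by apply: contra uX => /subq /sub /p0X.
case=> [|j] j_lt; first by rewrite eux.
have [->|j_ne] := eqVneq j.+1 (size q); first by rewrite nth_last_q euy orbT.
have jq : nth u q j \in q by apply: mem_nth; exact: j_lt.
have cX := p0X _ (sub _ (subq _ jq)).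
have cx : nth u q j != x.
  by apply: contraTneq jq => ->; move: uq; rewrite cons_uniq => /andP [].
have cy : nth u q j != y.
  by rewrite -nth_last_q -[nth u q j]/(nth u (x :: q) j.+1) nth_uniq.
rewrite orbF /=; apply/negbTE/negP => /(nbrX _ cX).
by rewrite (negbTE cx) (negbTE cy).
Qed.

Section Separator.

Variables (V : {set T}) (u y0 : T).
Hypothesis y0W : y0 \in non_nbr V u.
Local Notation D := (component e (non_nbr V u) y0).
Local Notation S := (boundary V u D).

Lemma component_non_nbr : {subset D <= non_nbr V u}.
Proof. exact/subsetP/component_sub. Qed.

Lemma boundary_clique : {in S &, forall x y, x != y -> e x y}.
Proof.
move=> x y /setIdP [_ /andP [eux /exists_inP [d1 d1D exd1]]].
move=> /setIdP [_ /andP [euy /exists_inP [d2 d2D eyd2]]] xy.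
pose X := x |: (y |: non_nbr V u).
have WX : non_nbr V u \subset X by rewrite /X setUA subsetUr.
apply: (chordal_common_nbr_adj (u := u) (X := X)) => //.
- rewrite !inE eqxx /= andbF orbF negb_or.
  by apply/andP; split; [apply: contraTneq eux|apply: contraTneq euy] => ->;
    rewrite e_irr.
- move=> z; rewrite !inE => /predU1P [->|/predU1P [->|/and3P [_ _ /negbTE ->]]] //.
  + by rewrite eqxx.
  + by rewrite eqxx orbT.
have cD d : d \in D -> connect (induced_rel e X) d y0.
  rewrite inE (sym_connect_sym (induced_rel_sym _ e_sym)); exact: connect_induced_sub.
have Dx d : d \in D -> d \in X by move/component_non_nbr/(subsetP WX).
have xd1 : induced_rel e X x d1 by rewrite /induced_rel /= exd1 (Dx _ d1D) !inE eqxx.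
have yd2 : induced_rel e X y d2.
  by rewrite /induced_rel /= eyd2 (Dx _ d2D) !inE eqxx orbT.
apply: connect_trans (connect1 xd1) (connect_trans (cD _ d1D) _).
rewrite (sym_connect_sym (induced_rel_sym _ e_sym)).
exact: connect_trans (connect1 yd2) (cD _ d2D).
Qed.

Lemma component_nbr_sub d z : d \in D -> z \in V -> e d z -> z \in D :|: S.
Proof.
move=> dD zV edz; have /setIdP [_ /andP [du neud]] := component_non_nbr dD.
have [zu|zu] := eqVneq z u; first by rewrite -zu e_sym edz in neud.
apply/setUP; case euz: (e u z).
  by right; rewrite inE zV euz; apply/exists_inP; exists d; rewrite // e_sym.
left; move: (dD); rewrite !inE => /connect_trans; apply; apply: connect1.
by rewrite /induced_rel /= edz component_non_nbr // inE zV zu euz.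
Qed.

Lemma component_boundary_sub : D :|: S \subset V :\ u.
Proof.
apply/subsetP => z /setUP [/component_non_nbr /setIdP [zV /andP [zu _]]|].
  by rewrite !inE zu.
rewrite !inE => /andP [zV /andP [euz _]]; rewrite zV andbT.
by apply: contraTneq euz => ->; rewrite e_irr.
Qed.

End Separator.

Lemma chordal_simplicial_avoiding V : simplicial_avoiding V.
Proof.
have [n] := ubnP #|V|; elim: n V => // n IH V V_lt u y0 uV y0W.
set D := component e (non_nbr V u) y0; set S := boundary V u D.
have HV := component_boundary_sub y0W.
have H_lt : #|D :|: S| < n.
  by apply: leq_ltn_trans (subset_leq_card HV) _; move: V_lt; rewrite (cardsD1 u) uV.
have y0S : y0 \in (D :|: S) :\: S.
  by move: y0W; rewrite !inE connect0 andbT => /and3P [_ _ /negbTE ->]; rewrite andbF.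
have [w wHS w_simp] :=
  simplicial_outside_clique (subsetUr _ _) y0S (boundary_clique y0W) (IH _ H_lt).
have wD : w \in D by case/setDP: wHS => /setUP [//|wS]; rewrite wS.
exists w; first exact: (component_non_nbr y0W).
move=> x y xV yV ewx ewy.
exact: w_simp (component_nbr_sub y0W wD xV ewx) (component_nbr_sub y0W wD yV ewy) _ _.
Qed.

Lemma chordal_simplicial_exists (V : {set T}) v :
  v \in V -> exists2 w, w \in V & simplicial V w.
Proof.
move=> vV; case: (pickP [pred x in V | non_nbr V x != set0]) => [u /andP [uV]|clique].
  case/set0Pn=> y yu; have [w /setIdP [wV _] w_simp] := chordal_simplicial_avoiding uV yu.
  by exists w.
exists v => // x y xV yV _ _ xy; apply: contraFT (clique x) => nexy /=.
by rewrite xV; apply/set0Pn; exists y; rewrite !inE yV eq_sym xy.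
Qed.

End Chordal.

Lemma component_setU1_simplicial (V P : {set T}) v b c :
  simplicial V v -> P \subset V -> b \in P -> c \in component e (v |: P) b ->
  c \in component e P b \/ c = v /\ exists2 c', c' \in component e P b & e v c'.
Proof.
move=> v_simp /subsetP PV bP.
have extend x y : x \in component e P b -> induced_rel e P x y -> y \in component e P b.
  by rewrite !inE => /connect_trans + xy; apply; apply: connect1.
rewrite inE.
pose Q c := c \in component e P b \/ c = v /\ exists2 c', c' \in component e P b & e v c'.
apply: (connect_invariant (a := Q)) => [x y|]; last first.
  by left; rewrite inE connect0.
move=> + /and3P [exy _ /setU1P [yv|yP]].
  subst y.
  case=> [xC|[xv _]]; last by rewrite xv e_irr in exy.
  by right; split=> //; exists x; rewrite // e_sym.
case=> [xC|[xv [c' c'C evc']]]; left.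
  have xP := subsetP (component_sub bP) _ xC.
  by apply: extend xC _; rewrite /induced_rel /= exy yP xP.
have c'P := subsetP (component_sub bP) _ c'C.
subst x; have [->//|yc'] := eqVneq y c'.
by apply: extend c'C _; rewrite /induced_rel /= c'P yP (v_simp c' y) ?PV // eq_sym.
Qed.

End Symmetric.

End Graph.

Section InducedCycle.

Variables (T : finType) (e : rel T).

Lemma path_iota_map (h : nat -> T) a n :
  (forall t, e (h t) (h t.+1)) -> path e (h a) (map h (iota a.+1 n)).
Proof. by move=> h_succ; elim: n a => //= n IH a; rewrite h_succ IH. Qed.

Lemma induced_cycle_rot m (f : 'I_m -> T) (i0 : 'I_m) : induced_cycle e f ->
  exists h : nat -> T, [/\ h 0 = f i0, forall t, h t \in codom f,
    {in gtn m &, injective h} &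
    forall t u, e (h t) (h u) = (u == t.+1 %[mod m]) || (t == u.+1 %[mod m])].
Proof.
move=> [f_inj f_adj]; have m0 : 0 < m := leq_ltn_trans (leq0n _) (ltn_ord i0).
exists (fun t => f (Ordinal (ltn_pmod (i0 + t) m0))); split.
- by congr f; apply: val_inj; rewrite /= addn0 modn_small.
- by move=> t; apply: codom_f.
- move=> t u /[!inE] tm um /f_inj /(congr1 val) /= /eqP.
  by rewrite eqn_modDl !modn_small // => /eqP.
have modS a : (a %% m).+1 %% m = a.+1 %% m by rewrite -addn1 modnDml addn1.
by move=> t u; rewrite f_adj /= !modS -!addnS !eqn_modDl.
Qed.

Lemma induced_cycle_split (rk : T -> nat) m (f : 'I_m -> T) :
  4 <= m -> induced_cycle e f ->
  exists w x r, x != last x r /\ [/\ uniq (w :: x :: r), path e x r,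
    {in x :: r, forall c, e w c = (c == x) || (c == last x r)},
    ~~ e x (last x r) & {in x :: r, forall c, rk c <= rk w}].
Proof.
move=> m4 cyc; have m0 : 0 < m by lia.
have [i0 _ i0_max] := @arg_maxnP _ (Ordinal m0) xpredT (rk \o f) isT.
have [h [h0 h_codom h_inj h_adj]] := induced_cycle_rot i0 cyc.
have h_eq t u : t < m -> u < m -> (h t == h u) = (t == u).
  by move=> tm um; apply: (inj_in_eq h_inj).
set r := map h (iota 2 (m - 2)).
have Dq : h 1 :: r = map h (iota 1 m.-1) by rewrite (_ : m.-1 = (m - 2).+1) //; lia.
have mem_q c : c \in h 1 :: r -> exists2 t, 0 < t < m & c = h t.
  by rewrite Dq => /mapP [t]; rewrite mem_iota => t_in ->; exists t => //; lia.
have last_q : last (h 1) r = h m.-1.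
  rewrite last_map (_ : m - 2 = (m - 3) + 1); last by lia.
  by rewrite iotaD last_cat /=; congr h; lia.
exists (h 0), (h 1), r; split; first by rewrite last_q h_eq; lia.
split.
- have Diota : iota 0 m = 0 :: iota 1 m.-1 by rewrite -{1}(prednK m0).
  rewrite Dq -map_cons -Diota map_inj_in_uniq ?iota_uniq // => t u /[!mem_iota] tm um.
  by apply: h_inj; rewrite inE; lia.
- by apply: (@path_iota_map h 1) => t; rewrite h_adj eqxx.
- move=> c /mem_q [t t_in ->]; rewrite h_adj last_q !h_eq ?eqn_mod_le //; lia.
- by rewrite last_q h_adj !eqn_mod_le; lia.
move=> c /mem_q [t _ ->]; have /codomP [i ->] := h_codom t.
by rewrite h0; apply: i0_max.
Qed.

End InducedCycle.

Section Enumeration.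

Variables (T : finType) (R : rel T).
Hypotheses (R_refl : reflexive R) (R_sym : symmetric R).

Definition component_order (s : seq T) :=
  forall (x0 : T) (k l : nat), k < l < size s ->
    nth x0 s k \in Lset R (nth x0 s l) \/
    [disjoint component (gedge R) [set x in take k.+1 s] (nth x0 s k)
       & Lset R (nth x0 s l)].

Lemma gedge_sym : symmetric (gedge R).
Proof. by move=> x y; rewrite /gedge /= eq_sym R_sym. Qed.

Lemma gedge_irr : irreflexive (gedge R).
Proof. by move=> x; rewrite /gedge /= eqxx. Qed.

Lemma gedgeE x y : x != y -> gedge R x y = R x y.
Proof. by rewrite /gedge /= => ->. Qed.

Lemma gedgeW x y : gedge R x y -> R x y.
Proof. by case/andP. Qed.

Lemma component_order_cons (V : {set T}) v s :
  simplicial (gedge R) V v -> {subset s <= V} -> v \notin s -> uniq s ->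
  component_order s -> component_order (v :: s).
Proof.
move=> v_simp sV vs us s_ord x0 [|k] [|l] //= kl; set w := nth x0 s l.
  case Rwv: (R w v); [by left; rewrite inE | right].
  rewrite disjoint_subset; apply/subsetP => c; rewrite inE => cC.
  have -> : c = v.
    apply: (connect_invariant (a := eq^~ v)) cC => // a b _ /and3P [_ _].
    by rewrite !inE take0 orbF => /eqP.
  by rewrite !inE Rwv.
set b := nth x0 s k; case Rwb: (R w b); [by left; rewrite inE | right].
have /andP [lt_kl lt_ls] := kl; have ws : w \in s by apply: mem_nth.
have [|bw_disj] := s_ord x0 k l kl; first by rewrite inE -/w -/b Rwb.
set P := [set x in take k.+1 s].
have PV : P \subset V by apply/subsetP => x /[!inE] /mem_take /sV.
have lt_ks : k < size s := ltn_trans lt_kl lt_ls.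
have bP : b \in P by rewrite inE in_take ?mem_nth // /b index_uniq.
have wP : w \notin P by rewrite inE in_take // /w index_uniq // ltnS -ltnNge.
have -> : [set x in v :: take k.+1 s] = v |: P by apply/setP => x; rewrite !inE.
rewrite disjoint_subset; apply/subsetP => c cC; rewrite inE.
case: (component_setU1_simplicial gedge_sym gedge_irr v_simp PV bP cC) => [cC'|].
  by rewrite (disjointFr bw_disj cC').
move=> [-> [c' c'C evc']]; apply: contraFN (disjointFr bw_disj c'C); rewrite !inE => Rwv.
have c'P := subsetP (component_sub _ bP) _ c'C.
have wv : w != v by apply: contraNneq vs => <-.
have wc' : w != c' by apply: contraNneq wP => ->.
have evw : gedge R v w by rewrite gedge_sym gedgeE.
rewrite -gedgeE //; apply: v_simp evw evc' wc'; [exact: sV | exact: subsetP PV _ c'P].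
Qed.

Lemma chordal_component_order_exists (V : {set T}) : chordal (gedge R) ->
  exists s, [/\ uniq s, s =i V & component_order s].
Proof.
move=> chord_R; have [n] := ubnP #|V|; elim: n V => // n IH V V_lt.
have [->|[v0 v0V]] := set_0Vmem V.
  by exists [::]; split=> // [x|x0 k l /andP [_ //]]; rewrite inE.
have [v vV v_simp] := chordal_simplicial_exists gedge_sym gedge_irr chord_R v0V.
have [|s [us sV s_ord]] := IH (V :\ v); first by move: V_lt; rewrite (cardsD1 v) vV.
have vs : v \notin s by rewrite sV !inE eqxx.
exists (v :: s); split; first by rewrite /= vs.
  by move=> x; rewrite inE sV !inE; case: eqVneq => // ->.
by apply: component_order_cons v_simp _ vs us s_ord => x; rewrite sV => /setD1P [].
Qed.

Section Converse.

Variable s : seq T.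
Hypotheses (s_all : forall x, x \in s) (s_ord : component_order s).

Lemma component_order_adj u w c : index u s < index w s ->
  c \in component (gedge R) [set x in take (index u s).+1 s] u -> R w c -> R w u.
Proof.
move=> lt_uw uC Rwc; have ws : index w s < size s by rewrite index_mem.
have /(s_ord u) [] : index u s < index w s < size s by rewrite lt_uw.
  by rewrite !nth_index // inE.
rewrite !nth_index // => uw_disj.
by move: (disjointFr uw_disj uC); rewrite inE Rwc.
Qed.

Lemma path_max_adj x p z w c : path (gedge R) x p -> z \in x :: p ->
  {in x :: p, forall y, index y s <= index z s} -> index z s < index w s ->
  c \in x :: p -> R w c -> R w z.
Proof.
move=> pth zp zmax lt_zw cp; apply: component_order_adj => //.
set P := [set y in take (index z s).+1 s].
have xpP : all [in P] (x :: p) by apply/allP => y yp; rewrite inE in_take // ltnS zmax.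
have /path_connect conn : path (induced_rel (gedge R) P) x p.
  by apply: sub_in_path xpP pth => a b aP bP eab; rewrite /induced_rel /= eab aP bP.
rewrite inE; apply: connect_trans (conn c cp).
by rewrite (sym_connect_sym (induced_rel_sym _ gedge_sym)) conn.
Qed.

Lemma index_ltn a b : a != b -> index a s <= index b s -> index a s < index b s.
Proof.
move=> ab; rewrite leq_eqVlt => /predU1P [/(index_inj a (s_all a) (s_all b)) eq_ab|//].
by rewrite eq_ab eqxx in ab.
Qed.

Section Cycle.

Variables (w x : T) (r : seq T).
Hypotheses (wxr_uniq : uniq (w :: x :: r)) (xr_path : path (gedge R) x r).
Hypothesis w_adj : {in x :: r, forall c, R w c = (c == x) || (c == last x r)}.
Hypothesis x_last : ~~ R x (last x r).
Hypothesis w_max : {in x :: r, forall c, index c s <= index w s}.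

Lemma cycle_index_ltn c : c \in x :: r -> index c s < index w s.
Proof.
move=> cq; apply: index_ltn (w_max cq).
by apply: contraNneq (_ : w \notin x :: r) => [<-|]; last by case/andP: wxr_uniq.
Qed.

Lemma cycle_head_not_max : ~ {in x :: r, forall c, index c s <= index x s}.
Proof.
case: r wxr_uniq xr_path w_adj x_last cycle_index_ltn => [_ _ _|r1 r'].
  by rewrite /= R_refl.
move=> uq pth adj xy late x_max.
set y := last x (r1 :: r'); have yr : y \in r1 :: r' := mem_last r1 r'.
have /andP [exr1 pr] : gedge R x r1 && path (gedge R) r1 r' := pth.
have /and3P [_ xr _] := uq.
have [z zr zmax] := exists_argmax_seq (index^~ s) r1 r'.
have zq : z \in x :: r1 :: r' by rewrite inE zr orbT.
have Rwy : R w y by rewrite adj ?eqxx ?orbT // inE yr orbT.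
have := path_max_adj pr zr zmax (late _ zq) yr Rwy.
rewrite adj // => /orP [/eqP zx|/eqP zy]; first by rewrite -zx zr in xr.
have lt_zx : index z s < index x s.
  by apply: index_ltn (x_max _ zq); apply: contraNneq xr => <-.
have := path_max_adj pr zr zmax lt_zx (mem_head r1 r') (gedgeW exr1).
by rewrite zy (negbTE xy).
Qed.

End Cycle.

Lemma component_order_no_cycle w x r : uniq (w :: x :: r) -> path (gedge R) x r ->
  {in x :: r, forall c, R w c = (c == x) || (c == last x r)} ->
  ~~ R x (last x r) -> {in x :: r, forall c, index c s <= index w s} -> False.
Proof.
move=> uq pth adj xy wmax; have [z zq zmax] := exists_argmax_seq (index^~ s) x r.
have Rwx : R w x by rewrite adj ?mem_head ?eqxx.
have := path_max_adj pth zq zmax (cycle_index_ltn uq wmax zq) (mem_head x r) Rwx.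
rewrite adj // => /orP [/eqP zx|/eqP zy].
  by apply: (cycle_head_not_max uq pth adj xy wmax) => c /zmax; rewrite zx.
set y := last x r in adj xy zy.
have Drev : y :: rev (belast x r) = rev (x :: r) by rewrite [x :: r]lastI rev_rcons.
have mem_revq c : (c \in y :: rev (belast x r)) = (c \in x :: r) by rewrite Drev mem_rev.
have last_rev : last y (rev (belast x r)) = x.
  by rewrite /y; case: (r) => [|r1 r'] //=; rewrite rev_cons last_rcons.
apply: (@cycle_head_not_max w y (rev (belast x r))); rewrite ?last_rev.
- by rewrite Drev /= mem_rev rev_uniq.
- by rewrite /y rev_path; apply: sub_path pth => a b; rewrite gedge_sym.
- by move=> c; rewrite mem_revq => /adj ->; rewrite orbC.
- by rewrite R_sym.
- by move=> c; rewrite mem_revq => /wmax.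
by move=> c; rewrite mem_revq -zy => /zmax.
Qed.

Lemma component_order_chordal : chordal (gedge R).
Proof.
move=> m f m4 cyc.
have [w [x [r [xl [uq pth adj nexl w_max]]]]] := induced_cycle_split (index^~ s) m4 cyc.
have wq : w \notin x :: r by case/andP: uq.
apply: (component_order_no_cycle uq pth _ _ w_max); last by rewrite -gedgeE.
by move=> c cq; rewrite -gedgeE ?adj //; apply: contraNneq wq => ->.
Qed.

End Converse.

End Enumeration.

Theorem proposition3p1 (Sigma : finType) (R : rel Sigma)
  (Rrefl : reflexive R) (Rsym : symmetric R) :
  chordal (gedge R) <->
  exists s : seq Sigma,
    [/\ uniq s, size s = #|Sigma| &
      forall (x0 : Sigma) (k l : nat), k < l < size s ->
        nth x0 s k \in Lset R (nth x0 s l) \/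
        [disjoint component (gedge R) [set x in take k.+1 s] (nth x0 s k)
           & Lset R (nth x0 s l)]].
Proof.
split=> [chord_R|[s [s_uniq s_size s_ord]]].
  have [s [s_uniq sT s_ord]] := chordal_component_order_exists Rsym [set: Sigma] chord_R.
  by exists s; split=> //; rewrite -(card_uniqP s_uniq) (eq_card sT) cardsT.
have sT : s =i Sigma by apply/subset_cardP; rewrite ?(card_uniqP s_uniq) ?subset_predT.
by apply: (component_order_chordal Rrefl Rsym _ s_ord) => x; rewrite sT.
Qed.
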